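(* Let $\lambda=[\lambda_1,\ldots,\lambda_s]$ and $\mu=[\mu_1,\ldots,\mu_t]$ be integral partitions such that $\lambda_i\mid\lambda_j$ whenever $i\ge j$. Suppose $\lambda\hookrightarrow\mu$. Then the first fit procedure always succeeds: if one processes $\lambda_1,\lambda_2,\ldots,\lambda_s$ in this order and places each $\lambda_i$ into any bin $j$ whose remaining capacity (namely $\mu_j$ minus the sum of the $\lambda$'s already placed in bin $j$) is at least $\lambda_i$, then, whatever such choices are made, at each step there exists a bin with remaining capacity at least the current $\lambda_i$, so all of $\lambda$ gets placed. Equivalently: for every $k$ with $\lambda_1\le\mu_k$, the sequence $[\lambda_2,\ldots,\lambda_s]$ embeds into the sequence of capacities obtained from $\mu$ by replacing $\mu_k$ with $\mu_k-\lambda_1$.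
   Context: An integral partition is a finite nonincreasing sequence of positive integers. $\lambda=[\lambda_1,\ldots,\lambda_m]$ embeds into a sequence of nonnegative integer capacities $\mu=[\mu_1,\ldots,\mu_n]$, written $\lambda\hookrightarrow\mu$, if there is a map $\varphi:\{1,\ldots,m\}\to\{1,\ldots,n\}$ with $\sum_{i\in\varphi^{-1}(j)}\lambda_i\le\mu_j$ for all $j$. *)

(* Partitions and capacity sequences are [seq nat];
   indices are 0-based (paper's lambda_i is [nth 0 lam (i-1)]). *)
From mathcomp Require Import all_boot.
Set Implicit Arguments. Unset Strict Implicit. Unset Printing Implicit Defensive.

Definition is_partition (l : seq nat) : bool :=
  sorted geq l && all (fun x => 0 < x) l.

Definition embeds (lam mu : seq nat) : Prop :=
  exists phi : nat -> nat,
    (forall i, i < size lam -> phi i < size mu) /\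
    (forall j, j < size mu ->
       \sum_(i < size lam | phi i == j) nth 0 lam i <= nth 0 mu j).

Definition divisibility_chain (lam : seq nat) : Prop :=
  forall i j, j <= i -> i < size lam -> nth 0 lam i %| nth 0 lam j.

Definition used (lam : seq nat) (f : nat -> nat) (l j : nat) : nat :=
  \sum_(l' < l | f l' == j) nth 0 lam l'.

Definition remaining (lam mu : seq nat) (f : nat -> nat) (l j : nat) : nat :=
  nth 0 mu j - used lam f l j.

Definition valid_run (lam mu : seq nat) (f : nat -> nat) (i : nat) : Prop :=
  forall l, l < i ->
    f l < size mu /\ nth 0 lam l <= remaining lam mu f l (f l).

(** If [lam] embeds into [mu], the first item [a = lam_0] can be moved to any
    bin [k] with room for it.  Since every item divides all earlier ones, the
    running load [G] of the items after [a] sitting in bin [k] is a multiple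
    of the next item as long as [G < a], so [G] climbs to exactly [a] or bin
    [k] runs out of items first.  Exchanging that prefix with [a] yields an
    embedding sending [a] to bin [k]; removing [a] then embeds the remaining
    items into [mu] with [a] subtracted from [mu_k].  Iterating along a
    first-fit run shows that the unplaced items always embed into the
    remaining capacities, so the next item fits somewhere. *)
From mathcomp Require Import all_boot zify.

Set Implicit Arguments.
Unset Strict Implicit.
Unset Printing Implicit Defensive.

Definition embedding (lam mu : seq nat) (phi : nat -> nat) : Prop :=
  (forall i, i < size lam -> phi i < size mu) /\
  (forall j, j < size mu -> used lam phi (size lam) j <= nth 0 mu j).

Lemma usedS lam f i j :
  used lam f i.+1 j = used lam f i j + (if f i == j then nth 0 lam i else 0).
Proof. by rewrite /used big_mkcond big_ord_recr /= [in RHS]big_mkcond. Qed.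

Lemma used_cons x s f n j :
  used (x :: s) f n.+1 j = (if f 0 == j then x else 0) + used s (f \o succn) n j.
Proof. by rewrite /used big_mkcond big_ord_recl /= [in RHS]big_mkcond. Qed.

Lemma divisibility_chain_drop lam i :
  divisibility_chain lam -> divisibility_chain (drop i lam).
Proof. by move=> ch x y yx; rewrite size_drop !nth_drop => xs; apply: ch; lia. Qed.

Lemma nth_dvd_used lam f t j : divisibility_chain lam ->
  t < size lam -> nth 0 lam t %| used lam f t j.
Proof. by move=> ch tl; apply: dvdn_sum => l _; apply: ch tl; apply: ltnW. Qed.

Lemma dvdn_gap d x y : d %| x -> d %| y -> x < y -> x + d <= y.
Proof.
move=> dx dy xy; have : d <= y - x by apply: dvdn_leq; rewrite ?subn_gt0 ?dvdn_sub.
lia.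
Qed.

Lemma used_threshold lam f j a n : divisibility_chain lam ->
  (forall i, i < size lam -> nth 0 lam i %| a) -> n <= size lam ->
  exists2 t, t <= n & used lam f t j <= a /\ (used lam f t j = a \/ t = n).
Proof.
move=> ch dvd_a; elim: n => [|n IH] nl.
  by exists 0 => //; split; [rewrite /used big_ord0 | right].
have [t tn [Gt [Ga|tE]]] := IH (ltnW nl); first by exists t; [apply: leqW | split=> //; left].
subst t; have [Gn|Gn] := ltnP (used lam f n j) a; last first.
  by exists n; rewrite ?leqnSn //; split=> //; left; apply/eqP; rewrite eqn_leq Gt.
exists n.+1 => //; split; last by right.
rewrite usedS; case: ifP => _; last by rewrite addn0 ltnW.
by apply: dvdn_gap => //; [apply: nth_dvd_used | apply: dvd_a].
Qed.

Definition swap_head (phi : nat -> nat) (t k i : nat) : nat :=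
  if i == 0 then k else if (i < t) && (phi i == k) then phi 0 else phi i.

(* Stated additively to avoid truncated subtraction: bin [k] gains [a = lam_0]
   and loses the moved load [used lam phi t k], bin [phi 0] the reverse. *)
Lemma used_swap_head lam phi t k j : 0 < size lam -> t <= size lam ->
  used lam (swap_head phi t k) (size lam) j
    + (if j == phi 0 then nth 0 lam 0 else 0)
    + (if j == k then used lam phi t k else 0)
  = used lam phi (size lam) j
    + (if j == k then nth 0 lam 0 else 0)
    + (if j == phi 0 then used lam phi t k else 0).
Proof.
move=> lam0 tl.
have head_sum (P : bool) : (if P then nth 0 lam 0 else 0) =
    \sum_(i < size lam) (if (i == 0 :> nat) && P then nth 0 lam i else 0).
  rewrite (bigD1 (Ordinal lam0)) //= big1 ?addn0 // => i.
  by rewrite -val_eqE /= => /negPf ->.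
have moved_sum (P : bool) : (if P then used lam phi t k else 0) =
    \sum_(i < size lam) (if (i < t) && (phi i == k) && P then nth 0 lam i else 0).
  rewrite /used (big_ord_widen_cond _ (fun i => phi i == k) (nth 0 lam) tl).
  rewrite big_mkcond; case: P.
    by apply: eq_bigr => i _; rewrite andbT andbC.
  by rewrite big1 // => i _; rewrite andbF.
rewrite !head_sum !moved_sum /used !(big_mkcond (fun i => _ == j)) -!big_split.
apply: eq_bigr => i _; rewrite /swap_head.
have [->|_] /= := eqVneq (i : nat) 0.
  rewrite [k == j]eq_sym [phi 0 == j]eq_sym.
  by case: (phi 0 =P k) => [->|_]; rewrite ?eqxx ?andbF //= !addn0 addnC.
case: (boolP ((i < t) && (phi i == k))) => [/andP[_ /eqP ->]|_] /=.
  by rewrite [k == j]eq_sym [phi 0 == j]eq_sym !addn0 addnC.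
by rewrite !addn0.
Qed.

Lemma embedding_move_head lam mu phi k :
  divisibility_chain lam -> embedding lam mu phi ->
  0 < size lam -> k < size mu -> nth 0 lam 0 <= nth 0 mu k ->
  exists2 psi, embedding lam mu psi & psi 0 = k.
Proof.
move=> ch [rng load] lam0 kmu fits.
have [<-|mk] := eqVneq (phi 0) k; first by exists phi.
have dvd_head i : i < size lam -> nth 0 lam i %| nth 0 lam 0 by apply: ch.
have [t tl [Gt Gcase]] := used_threshold phi k ch dvd_head (leqnn _).
exists (swap_head phi t k) => //; split=> [i il | j jmu].
  by rewrite /swap_head; do 2!case: ifP => _ //; apply: rng.
have := used_swap_head phi k j lam0 tl; have := load j jmu.
have [->|_] := eqVneq j k.
  rewrite [k == _]eq_sym (negbTE mk).
  by case: Gcase => [-> | tE]; [|move: tE Gt => ->]; lia.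
by have [->|_] := eqVneq j (phi 0); lia.
Qed.

Lemma embedding_cons_embeds x s mu psi : embedding (x :: s) mu psi ->
  embeds s (set_nth 0 mu (psi 0) (nth 0 mu (psi 0) - x)).
Proof.
move=> [rng load]; have psi0 : psi 0 < size mu by apply: rng.
exists (psi \o succn); split=> [i il | j].
  by rewrite size_set_nth (maxn_idPr psi0); apply: rng.
rewrite size_set_nth (maxn_idPr psi0) nth_set_nth /= => jmu.
rewrite -[\sum_(_ < _ | _) _]/(used s (psi \o succn) (size s) j).
have := load j jmu; rewrite (used_cons x s psi (size s) j) [psi 0 == j]eq_sym.
by case: (eqVneq j (psi 0)) => [->|ne]; rewrite ?eqxx ?(negbTE ne); lia.
Qed.

Lemma embeds_place_head x s mu k : divisibility_chain (x :: s) ->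
  embeds (x :: s) mu -> k < size mu -> x <= nth 0 mu k ->
  embeds s (set_nth 0 mu k (nth 0 mu k - x)).
Proof.
move=> ch [phi emb] kmu fits.
have [psi emb_psi <-] := embedding_move_head ch emb (ltn0Sn _) kmu fits.
exact: embedding_cons_embeds.
Qed.

Lemma embeds_head_fits x s mu :
  embeds (x :: s) mu -> exists2 j, j < size mu & x <= nth 0 mu j.
Proof.
move=> [phi emb]; have [rng load] : embedding (x :: s) mu phi := emb.
exists (phi 0); first exact: rng.
have := load _ (rng 0 (ltn0Sn _)); rewrite (used_cons x s phi (size s)) eqxx.
exact: leq_trans (leq_addr _ _).
Qed.

Lemma mkseq_remaining0 lam mu f :
  mkseq (remaining lam mu f 0) (size mu) = mu.
Proof.
rewrite -[RHS](mkseq_nth 0); apply: eq_mkseq => j.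
by rewrite /remaining /used big_ord0 subn0.
Qed.

Lemma mkseq_remainingS lam mu f i : f i < size mu ->
  let c := mkseq (remaining lam mu f i) (size mu) in
  set_nth 0 c (f i) (nth 0 c (f i) - nth 0 lam i) = mkseq (remaining lam mu f i.+1) (size mu).
Proof.
move=> fi; apply: (@eq_from_nth _ 0); first by rewrite size_set_nth !size_mkseq (maxn_idPr fi).
rewrite size_set_nth size_mkseq (maxn_idPr fi) => j jmu.
rewrite nth_set_nth /= !nth_mkseq // /remaining usedS.
by case: (eqVneq (f i) j) => [->|_]; [rewrite subnDA | rewrite addn0].
Qed.

Lemma first_fit_invariant lam mu f i :
  divisibility_chain lam -> embeds lam mu ->
  i <= size lam -> valid_run lam mu f i ->
  embeds (drop i lam) (mkseq (remaining lam mu f i) (size mu)).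
Proof.
move=> ch emb; elim: i => [|i IH] il run; first by rewrite drop0 mkseq_remaining0.
have [fi fits] := run i (ltnSn i).
have := IH (ltnW il) (fun l li => run l (ltnW li)).
rewrite (drop_nth 0 il) -mkseq_remainingS //.
move=> emb_i; apply: (embeds_place_head _ emb_i); rewrite ?size_mkseq ?nth_mkseq //.
by rewrite -(drop_nth 0 il); apply: divisibility_chain_drop.
Qed.

Theorem theorem3p1 (lam mu : seq nat) :
  is_partition lam -> is_partition mu ->
  divisibility_chain lam ->
  embeds lam mu ->
  (forall (i : nat) (f : nat -> nat), i < size lam -> valid_run lam mu f i ->
     exists2 j, j < size mu & nth 0 lam i <= remaining lam mu f i j)
  /\
  (0 < size lam ->
   forall k, k < size mu -> nth 0 lam 0 <= nth 0 mu k ->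
     embeds (behead lam) (set_nth 0 mu k (nth 0 mu k - nth 0 lam 0))).
Proof.
move=> _ _ ch emb; split.
  move=> i f il run; have := first_fit_invariant ch emb (ltnW il) run.
  rewrite (drop_nth 0 il) => /embeds_head_fits[j].
  by rewrite size_mkseq => jmu; rewrite nth_mkseq //; exists j.
by case: lam ch emb => // x s ch emb _ k; apply: embeds_place_head.
Qed.
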